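(* Let $d$ be a prime, $n,N_1,N_2\in\mathbb{N}$, $\omega\in\mathbb{C}$ a primitive $d$-th root of unity, and $W_1,W_2\in M_n(\mathbb{Z}_d)$. For $i=1,2$ let $\mu_i:\mathcal{G}_d^n(W_i)\to GL(\mathbb{C}^{N_i})$, $\mu_i(a,p,x)=a\,\omega^p\,\tau_i(x)$, be a polar commutator representation. If $\Omega_i=W_i-W_i^T$ has full rank over $\mathbb{Z}_d$ for $i=1,2$, then there exists a group isomorphism $\phi:\mathcal{G}_d^n(W_1)\to\mathcal{G}_d^n(W_2)$. Furthermore, if $\phi$ is such an isomorphism, the representations $\mu_1$ and $\mu_2\circ\phi$ have the same character, and there exists a set $B\subseteq\mathcal{G}_d^n(W_1)$ such that $\mu_1(B)$ is a set of Hermitian (respectively unitary) matrices spanning the complex vector space $M_{N_1}(\mathbb{C})$ and $\mu_2(\phi(g))$ is Hermitian (respectively unitary) for all $g\in B$, then $N_1=N_2=:N$ and there exists a unitary $S\in U(N)$ with $\mu_2(\phi(g))=S\mu_1(g)S^{-1}$ for all $g\in\mathcal{G}_d^n(W_1)$.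
   Context: Let $F\subset\mathbb{C}^\times$ be a fixed set of representatives of the quotient $\mathbb{C}^\times/\langle\omega\rangle$ with $1\in F$, and let $r:\mathbb{C}^\times\to F$, $u:\mathbb{C}^\times\to\mathbb{Z}_d$ be such that $a=r(a)\,\omega^{u(a)}$ for all $a\in\mathbb{C}^\times$. For $W\in M_n(\mathbb{Z}_d)$, the polar commutator group $\mathcal{G}_d^n(W)$ is the set $F\times\mathbb{Z}_d\times\mathbb{Z}_d^n$ with multiplication $(a,p,x)\cdot(b,q,y)=(r(ab),\,u(ab)+p+q+x^TWy,\,x+y)$. A polar commutator representation of $\mathcal{G}_d^n(W)$ in $\mathbb{C}^N$ is a map $\mu(a,p,x)=a\,\omega^p\,\tau(x)$, where $\tau:\mathbb{Z}_d^n\to GL(\mathbb{C}^N)$ is such that $\mu$ is an injective group homomorphism. The character of a representation is its trace. *)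

From HB Require Import structures.
From mathcomp Require Import all_boot all_order all_algebra.
From mathcomp Require Import reals complex.
Set Implicit Arguments. Unset Strict Implicit. Unset Printing Implicit Defensive.
Import Order.TTheory GRing.Theory Num.Theory.
Local Open Scope ring_scope.
Local Open Scope complex_scope.

(* Polar data: the fixed set of representatives F of C^x / <w>, with 1 \in F,
   and the maps r : C^x -> F, u : C^x -> Z_d with a = r(a) w^(u(a)).
   (r and u are given on all of C; their values at 0 are never used,
   r is only required to land in F there.) *)
Record polar_data (R : realType) (d : nat) (w : R[i]) := PolarData {
  pF : pred R[i];
  pr : R[i] -> R[i];
  pu : R[i] -> 'F_d;
  pF1 : 1 \in pF;
  pF_neq0 : forall a, a \in pF -> a != 0;
  pF_cover : forall a, a != 0 -> exists f (k : nat), f \in pF /\ a = f * w ^+ k;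
  pF_disj : forall f g (k : nat), f \in pF -> g \in pF -> f = g * w ^+ k -> f = g;
  pr_in : forall a, pr a \in pF;
  pru : forall a, a != 0 -> a = pr a * w ^+ (nat_of_ord (pu a))
}.

Section PolarGroup.
Variables (R : realType) (d : nat) (w : R[i]) (P : polar_data d w) (n : nat).

Definition Fset := {a : R[i] | a \in pF P}.

Definition gelem := (Fset * 'F_d * 'cV['F_d]_n)%type.

Definition gmul (W : 'M['F_d]_n) (g h : gelem) : gelem :=
  let: (a, p, x) := g in
  let: (b, q, y) := h in
  (exist (fun c => c \in pF P) (pr P (sval a * sval b)) (pr_in P _),
   pu P (sval a * sval b) + p + q + (x^T *m W *m y) 0 0,
   x + y).

Definition group_iso (W1 W2 : 'M['F_d]_n) (phi : gelem -> gelem) :=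
  bijective phi /\ forall g h, phi (gmul W1 g h) = gmul W2 (phi g) (phi h).

Definition polar_mu (N : nat) (tau : 'cV['F_d]_n -> 'M[R[i]]_N) (g : gelem)
  : 'M[R[i]]_N :=
  let: (a, p, x) := g in (sval a * w ^+ (nat_of_ord p)) *: tau x.

Definition polar_rep (W : 'M['F_d]_n) (N : nat)
    (tau : 'cV['F_d]_n -> 'M[R[i]]_N) :=
  [/\ forall x, tau x \in unitmx,
      injective (polar_mu tau) &
      forall g h, polar_mu tau (gmul W g h) = polar_mu tau g *m polar_mu tau h].

End PolarGroup.

Definition adjmx (R : realType) m k (M : 'M[R[i]]_(m, k)) : 'M[R[i]]_(k, m) :=
  (map_mx Num.conj M)^T.
Definition hermitian_mx (R : realType) N (M : 'M[R[i]]_N) := adjmx M = M.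
Definition unitary_mx (R : realType) N (M : 'M[R[i]]_N) :=
  M *m adjmx M = 1%:M /\ adjmx M *m M = 1%:M.

Definition spans_mx (R : realType) N (T : Type) (B : T -> Prop)
    (f : T -> 'M[R[i]]_N) :=
  forall M : 'M[R[i]]_N, exists (k : nat) (g : 'I_k -> T) (c : 'I_k -> R[i]),
    (forall i, B (g i)) /\ M = \sum_(i < k) c i *: f (g i).

(* The form W - W^T is alternating; when it is invertible, the symplectic normal
   form gives A with A^T (W2 - W2^T) A = W1 - W1^T. Then M := A^T W2 A - W1 is
   symmetric, and (a, p, x) |-> (a w^p w^(Q(x)), A x), where Q is a quadratic
   refinement of M, is an isomorphism G(W1) -> G(W2).
   For the representations, let mu2' := mu2 o phi. Comparing characters at the
   identity gives N1 = N2. Equal characters make sum_k c_k mu1(g_k) |->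
   sum_k c_k mu2'(g_k) well defined: if the first sum is 0, the second one, Y,
   satisfies tr (mu2'(h) Y) = 0 for all h, hence tr (Y^* Y) = 0 and Y = 0 as soon
   as Y^* lies in the span of mu2', which the Hermitian (resp. unitary) hypothesis
   on B provides. Transporting the matrix units of M_N(C) yields matrix units,
   hence an invertible S with mu2' = S mu1 S^-1. Finally S^* S commutes with the
   spanning set mu1(B), so it is a positive scalar and S rescales to a unitary. *)

From HB Require Import structures.
From mathcomp Require Import all_boot all_order all_algebra all_fingroup.
From mathcomp Require Import reals complex ring.
Set Implicit Arguments. Unset Strict Implicit. Unset Printing Implicit Defensive.
Import Order.TTheory GRing.Theory Num.Theory.
Local Open Scope ring_scope.

Section AlternatingForms.
Variable F : fieldType.

(* Unlike skew-symmetry, this forces a zero diagonal in characteristic 2. *)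
Definition alternating_mx n (O : 'M[F]_n) := exists U : 'M[F]_n, O = U - U^T.

Lemma alternating_mx_diag n (O : 'M[F]_n) i : alternating_mx O -> O i i = 0.
Proof. by case=> U ->; rewrite !mxE subrr. Qed.

Lemma alternating_mx_opp n (O : 'M[F]_n) i j :
  alternating_mx O -> O j i = - O i j.
Proof. by case=> U ->; rewrite !mxE opprB. Qed.

Lemma alternating_mx_congr n m (O : 'M[F]_n) (P : 'M[F]_(n, m)) :
  alternating_mx O -> alternating_mx (P^T *m O *m P).
Proof.
case=> U ->; exists (P^T *m U *m P).
by rewrite mulmxBr mulmxBl !trmx_mul trmxK mulmxA.
Qed.

Lemma alternating_mx_drsubmx n1 n2 (O : 'M[F]_(n1 + n2)) :
  alternating_mx O -> alternating_mx (drsubmx O).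
Proof. by case=> U ->; exists (drsubmx U); apply/matrixP=> i j; rewrite !mxE. Qed.

Lemma alternating_mx_block n1 n2 (O : 'M[F]_(n1 + n2)) :
  alternating_mx O -> ursubmx O = 0 -> O = block_mx (ulsubmx O) 0 0 (drsubmx O).
Proof.
move=> altO urO; rewrite -{1}[O]submxK urO; congr block_mx.
apply/matrixP=> i j; rewrite !mxE (alternating_mx_opp _ _ altO).
by have /matrixP/(_ j i) := urO; rewrite !mxE => ->; rewrite oppr0.
Qed.

Definition hyperbolic_mx : 'M[F]_2 := \matrix_(i, j)
  (if (i == 0) && (j == 1) then 1 else if (i == 1) && (j == 0) then -1 else 0).

Fixpoint symplectic_mx n : 'M[F]_n :=
  if n is n'.+2 then block_mx hyperbolic_mx 0 0 (symplectic_mx n') else 0.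

Lemma ord2P (i : 'I_2) : i = 0 \/ i = 1.
Proof. by case: i => [[|[|//]]] Hi; [left|right]; apply: val_inj. Qed.

Lemma hyperbolic_mx_sqr : hyperbolic_mx *m hyperbolic_mx = - 1%:M.
Proof.
apply/matrixP=> i j; rewrite !mxE big_ord_recl big_ord1 !mxE.
by case: (ord2P i) => ->; case: (ord2P j) => -> /=; ring.
Qed.

Lemma unitmx_row_neq0 n (O : 'M[F]_n) i :
  O \in unitmx -> exists j, O i j != 0.
Proof.
move=> unitO; apply/existsP; apply: contraLR unitO => /existsPn O_i0.
rewrite unitmxE (expand_det_row _ i) big1 ?unitr0 // => j _.
by rewrite (eqP (negbNE (O_i0 j))) mul0r.
Qed.

Lemma perm_mx_congrE n (O : 'M[F]_n) (s : {perm 'I_n}) i j :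
  ((perm_mx s^-1)^T *m O *m perm_mx s^-1) i j = O (s i) (s j).
Proof. by rewrite tr_perm_mx invgK -row_permE -col_permE !mxE. Qed.

Lemma alternating_mx_hyperbolic_corner n (O : 'M[F]_(2 + n)) :
  alternating_mx O -> O \in unitmx ->
  exists2 P, P \in unitmx & ulsubmx (P^T *m O *m P) = hyperbolic_mx.
Proof.
move=> altO unitO; set i0 := lshift n (0 : 'I_2); set i1 := lshift n (1 : 'I_2).
(* Move a nonzero entry of row i0 to column i1, then rescale column i1. *)
have [c Oc_neq0] := unitmx_row_neq0 i0 unitO.
have c_neq0 : c != i0.
  by apply: contraNneq Oc_neq0 => ->; rewrite alternating_mx_diag.
pose t := tperm i1 c; have t0 : t i0 = i0 by rewrite tpermD.
pose a := O i0 c; pose d := \row_k (if k == i1 then a^-1 else 1).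
have d0 : d 0 i0 = 1 by rewrite mxE.
have d1 : d 0 i1 = a^-1 by rewrite mxE eqxx.
exists (perm_mx t^-1 *m diag_mx d).
  rewrite unitmx_mul unitmx_perm unitmxE det_diag unitfE prodf_seq_neq0.
  by apply/allP=> k _; rewrite mxE; case: ifP; rewrite ?invr_eq0 ?oner_eq0.
pose X := (perm_mx t^-1)^T *m O *m perm_mx t^-1.
have -> : (perm_mx t^-1 *m diag_mx d)^T *m O *m (perm_mx t^-1 *m diag_mx d)
    = diag_mx d *m X *m diag_mx d by rewrite trmx_mul tr_diag_mx !mulmxA.
have DXD (Y : 'M_(2 + n)) k l :
  (diag_mx d *m Y *m diag_mx d) k l = d 0 k * Y k l * d 0 l.
  by rewrite mul_mx_diag mul_diag_mx !mxE.
apply/matrixP=> i j; rewrite 2![LHS]mxE DXD perm_mx_congrE [RHS]mxE.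
case: (ord2P i) => ->; case: (ord2P j) => ->; rewrite -/i0 -/i1 ?t0 ?tpermL ?d0 ?d1 /=.
- by rewrite (alternating_mx_diag _ altO) mulr0 mul0r.
- by rewrite mul1r mulfV.
- by rewrite (alternating_mx_opp _ _ altO) mulr1 mulrN mulVf.
- by rewrite (alternating_mx_diag _ altO) mulr0 mul0r.
Qed.

Lemma alternating_mx_split n (O : 'M[F]_(2 + n)) :
  alternating_mx O -> O \in unitmx ->
  exists2 P, P \in unitmx & exists2 O', alternating_mx O' &
    P^T *m O *m P = block_mx hyperbolic_mx 0 0 O'.
Proof.
move=> altO unitO; have [P1 unitP1 ulO1] := alternating_mx_hyperbolic_corner altO unitO.
have altO1 := alternating_mx_congr P1 altO.
set O1 := P1^T *m O *m P1 in altO1 ulO1.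
pose P2 : 'M[F]_(2 + n) := block_mx 1%:M (hyperbolic_mx *m ursubmx O1) 0 1%:M.
have altO2 := alternating_mx_congr P2 altO1.
have ulO2 : ulsubmx (P2^T *m O1 *m P2) = hyperbolic_mx.
  rewrite /P2 tr_block_mx -{2}[O1]submxK !mulmx_block block_mxKul ulO1.
  by rewrite !trmx0 trmx1 !mul1mx !mul0mx mulmx1 mulmx0 !addr0.
have urO2 : ursubmx (P2^T *m O1 *m P2) = 0.
  rewrite /P2 tr_block_mx -{2}[O1]submxK !mulmx_block block_mxKur ulO1.
  rewrite !trmx0 trmx1 !mul1mx !mul0mx !mulmx1 !addr0 mulmxA hyperbolic_mx_sqr.
  by rewrite mulNmx mul1mx addNr.
exists (P1 *m P2).
  by rewrite unitmx_mul unitP1 unitmxE det_ublock !det1 mulr1 unitr1.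
have -> : (P1 *m P2)^T *m O *m (P1 *m P2) = P2^T *m O1 *m P2.
  by rewrite trmx_mul !mulmxA.
exists (drsubmx (P2^T *m O1 *m P2)); first exact: alternating_mx_drsubmx.
by rewrite -ulO2; apply: alternating_mx_block.
Qed.

Lemma unitmx_ublock n1 n2 (A : 'M[F]_n1) (B : 'M[F]_(n1, n2)) (D : 'M[F]_n2) :
  (block_mx A B 0 D \in unitmx) = (A \in unitmx) && (D \in unitmx).
Proof. by rewrite !unitmxE det_ublock unitrM. Qed.

Lemma alternating_mx_canonical n (O : 'M[F]_n) :
  alternating_mx O -> O \in unitmx ->
  exists2 P, P \in unitmx & P^T *m O *m P = symplectic_mx n.
Proof.
have [k] := ubnP n; elim: k n O => // k IHk [|[|n]] O ltnk altO unitO.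
- by exists 1%:M; rewrite ?unitmx1 // !flatmx0.
- have O0 : O = 0.
    by apply/matrixP=> i j; rewrite (ord1 i) (ord1 j) mxE alternating_mx_diag.
  by move: unitO; rewrite O0 unitmxE det0 unitr0.
have [P unitP [O' altO' eqO]] := alternating_mx_split altO unitO.
have unitO' : O' \in unitmx.
  have : P^T *m O *m P \in unitmx by rewrite !unitmx_mul unitmx_tr unitP unitO.
  by rewrite eqO (unitmx_ublock hyperbolic_mx) => /andP[].
have [Q unitQ eqQ] := IHk n O' (ltnW ltnk) altO' unitO'.
exists (P *m block_mx 1%:M 0 0 Q).
  by rewrite unitmx_mul unitP (unitmx_ublock (1%:M : 'M_2)) unitmx1.
set Bk := block_mx _ _ _ _.
have -> : (P *m Bk)^T *m O *m (P *m Bk) = Bk^T *m (P^T *m O *m P) *m Bk.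
  by rewrite trmx_mul !mulmxA.
rewrite eqO /Bk tr_block_mx !trmx0 trmx1.
rewrite !mulmx_block !mul1mx !mul0mx !mulmx0 !addr0 !add0r mulmx1 eqQ.
by rewrite (mul0mx _ Q) (mul0mx _ (1%:M : 'M_2)).
Qed.

Lemma alternating_mx_congruent n (O1 O2 : 'M[F]_n) :
  alternating_mx O1 -> O1 \in unitmx -> alternating_mx O2 -> O2 \in unitmx ->
  exists2 A, A \in unitmx & A^T *m O2 *m A = O1.
Proof.
move=> altO1 unitO1 altO2 unitO2.
have [P1 unitP1 eqO1] := alternating_mx_canonical altO1 unitO1.
have [P2 unitP2 eqO2] := alternating_mx_canonical altO2 unitO2.
exists (P2 *m invmx P1); first by rewrite unitmx_mul unitP2 unitmx_inv.
have -> : (P2 *m invmx P1)^T *m O2 *m (P2 *m invmx P1)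
    = (invmx P1)^T *m (P2^T *m O2 *m P2) *m invmx P1 by rewrite trmx_mul !mulmxA.
rewrite eqO2 -eqO1 trmx_inv !mulmxA mulVmx ?unitmx_tr // mul1mx.
by rewrite -mulmxA mulmxV // mulmx1.
Qed.

End AlternatingForms.

Section PolarGroup.
Variables (R : realType) (d : nat) (w : R[i]) (P : polar_data d w).
Hypotheses (d_prime : prime d) (w_prim : d.-primitive_root w).

Definition wexp (k : 'F_d) : R[i] := w ^+ k.

Lemma wexp0 : wexp 0 = 1.
Proof. exact: expr0. Qed.

Lemma wexpD a b : wexp (a + b) = wexp a * wexp b.
Proof.
rewrite /wexp -exprD -(prim_expr_mod w_prim (a + b)%N); congr (w ^+ _).
by rewrite /=; congr (_ %% _)%N; apply: Fp_cast.
Qed.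

Lemma wexp_sum I (r : seq I) (Q : pred I) (f : I -> 'F_d) :
  wexp (\sum_(i <- r | Q i) f i) = \prod_(i <- r | Q i) wexp (f i).
Proof. exact: (big_morph _ wexpD wexp0). Qed.

Lemma wexp_neq0 k : wexp k != 0.
Proof. by rewrite expf_neq0 // (prim_root_eq0 w_prim) -lt0n prime_gt0. Qed.

Lemma ltn_Fp (k : 'F_d) : (k < d)%N.
Proof. by rewrite -[d in (_ < d)%N](Fp_cast d_prime). Qed.

Lemma wexp_inj : injective wexp.
Proof.
move=> a b /eqP; rewrite /wexp (eq_prim_root_expr w_prim) !modn_small ?ltn_Fp //.
by move/eqP/val_inj.
Qed.

Variable n : nat.
Local Notation G := (gelem P n).

Definition gcoef (g : G) : R[i] := sval g.1.1 * wexp g.1.2.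

Definition gelem_of (z : R[i]) (x : 'cV['F_d]_n) : G :=
  (exist (fun c => c \in pF P) (pr P z) (pr_in P z), pu P z, x).

Definition bform (W : 'M['F_d]_n) (x y : 'cV['F_d]_n) : 'F_d := (x^T *m W *m y) 0 0.

Lemma pr_puE z : z != 0 -> pr P z * wexp (pu P z) = z.
Proof. by move=> z_neq0; rewrite /wexp -pru. Qed.

Lemma gcoef_of z x : z != 0 -> gcoef (gelem_of z x) = z.
Proof. exact: pr_puE. Qed.

Lemma gcoef_neq0 g : gcoef g != 0.
Proof. by case: g => [[[a Fa] p] x]; rewrite mulf_neq0 ?wexp_neq0 ?(pF_neq0 Fa). Qed.

Lemma gcoef_gmul W g h : gcoef (gmul W g h) = gcoef g * gcoef h * wexp (bform W g.2 h.2).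
Proof.
case: g h => [[[a Fa] p] x] [[[b Fb] q] y]; rewrite /gcoef /= !wexpD !mulrA.
by rewrite pr_puE ?mulf_neq0 ?(pF_neq0 Fa) ?(pF_neq0 Fb) //; ring.
Qed.

Lemma gmul_vec (W : 'M['F_d]_n) (g h : G) : (gmul W g h).2 = g.2 + h.2.
Proof. by case: g h => [[a p] x] [[b q] y]. Qed.

Lemma gelem_eq g h : gcoef g = gcoef h -> g.2 = h.2 -> g = h.
Proof.
case: g h => [[[a Fa] p] x] [[[b Fb] q] y] eq_coef /= eq_xy.
have {}eq_coef : a * wexp p = b * wexp q := eq_coef.
have eq_ab : a = b.
  apply: (pF_disj (k := nat_of_ord (q - p)) Fa Fb); change (a = b * wexp (q - p)).
  by apply: (mulIf (wexp_neq0 p)); rewrite -mulrA -wexpD subrK.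
subst b; have eq_pq : p = q by apply/wexp_inj/(mulfI (pF_neq0 Fa)).
by subst; congr (_, _, _); apply: val_inj.
Qed.

Definition gid : G := gelem_of 1 0.

Lemma gcoef_gid : gcoef gid = 1.
Proof. exact/gcoef_of/oner_neq0. Qed.

Lemma gmul_gid (W : 'M['F_d]_n) : gmul W gid gid = gid.
Proof.
apply: gelem_eq; last by rewrite gmul_vec addr0.
by rewrite gcoef_gmul gcoef_gid /bform mulmx0 mxE wexp0 !mulr1.
Qed.

Lemma gmul_right_inverse (W : 'M['F_d]_n) (g : G) : exists h, gmul W g h = gid.
Proof.
have c_neq0 : gcoef g * wexp (bform W g.2 (- g.2)) != 0.
  by rewrite mulf_neq0 ?gcoef_neq0 ?wexp_neq0.
exists (gelem_of (gcoef g * wexp (bform W g.2 (- g.2)))^-1 (- g.2)).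
apply: gelem_eq; last by rewrite gmul_vec addrN.
by rewrite gcoef_gmul gcoef_of ?invr_eq0 // gcoef_gid mulrAC mulfV.
Qed.

Lemma Fp_char2_cases : 2%:R == 0 :> 'F_d -> forall a : 'F_d, a = 0 \/ a = 1.
Proof.
move=> /eqP two0 a; have : (d %| 2)%N by rewrite /dvdn -val_Fp_nat // two0.
rewrite dvdn_prime2 // => /eqP d2; have := ltn_Fp a; rewrite {2}d2.
by case: a => [[|[|//]] ?] _; [left | right]; apply: val_inj.
Qed.

(* In characteristic 2 the square root stands in for w ^ (m a^2 / 2). *)
Definition wquad1 (m a : 'F_d) : R[i] :=
  if 2%:R == 0 :> 'F_d then (if a == 0 then 1 else sqrtC (wexp m)^-1)
  else wexp (m * a * a / 2%:R).

Lemma wquad1_neq0 m a : wquad1 m a != 0.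
Proof.
rewrite /wquad1; case: ifP => _; last exact: wexp_neq0.
by case: ifP => _; rewrite ?oner_eq0 ?sqrtC_eq0 ?invr_eq0 ?wexp_neq0.
Qed.

Lemma wquad1D m a b : wquad1 m (a + b) = wquad1 m a * wquad1 m b * wexp (m * a * b).
Proof.
rewrite /wquad1; case: ifP => [char2 | /negbT two_neq0]; last first.
  by rewrite -!wexpD; congr wexp; field.
have [->|->] := Fp_char2_cases char2 a.
  by rewrite add0r mulr0 mul0r wexp0 eqxx !mul1r mulr1.
have [->|->] := Fp_char2_cases char2 b; first by rewrite addr0 mulr0 wexp0 eqxx !mulr1.
have -> : 1 + 1 = 0 :> 'F_d by apply/eqP; rewrite -(natrD _ 1 1).
by rewrite eqxx oner_eq0 !mulr1 -expr2 sqrtCK mulVf ?wexp_neq0.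
Qed.

Lemma bformE W x y : bform W x y = \sum_i \sum_j x i 0 * W i j * y j 0.
Proof.
rewrite /bform mxE; under eq_bigr => j _ do rewrite mxE big_distrl.
rewrite exchange_big; apply: eq_bigr => i _; apply: eq_bigr => j _.
by rewrite !mxE.
Qed.

Lemma bformDl W x y z : bform W (x + y) z = bform W x z + bform W y z.
Proof. by rewrite /bform linearD /= !mulmxDl mxE. Qed.

Lemma bformDr W x y z : bform W z (x + y) = bform W z x + bform W z y.
Proof. by rewrite /bform mulmxDr mxE. Qed.

Lemma bformB W W' x y : bform (W - W') x y = bform W x y - bform W' x y.
Proof. by rewrite /bform mulmxBr mulmxBl [LHS]mxE [X in _ + X]mxE. Qed.

Definition upper_mx (M : 'M['F_d]_n) : 'M['F_d]_n :=
  \matrix_(i, j) if (i < j)%N then M i j else 0.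

Lemma bform_upper M x y : M^T = M ->
  bform (upper_mx M) x y + bform (upper_mx M) y x + \sum_i M i i * x i 0 * y i 0
  = bform M x y.
Proof.
move=> symM; rewrite !bformE [in X in _ + X + _]exchange_big -!big_split /=.
apply: eq_bigr => i _; rewrite -big_split /= (bigD1 i) // [in RHS](bigD1 i) //=.
rewrite !mxE ltnn !mulr0 !mul0r !add0r addrC (mulrC (M i i)); congr (_ + _).
apply: eq_bigr => j neq_ji; rewrite !mxE -{2}symM mxE.
case: ltngtP => [_|_|eq_ij]; last by rewrite (val_inj eq_ij) eqxx in neq_ji.
- by rewrite mulr0 mul0r addr0.
- by rewrite mulr0 mul0r add0r; ring.
Qed.

Definition wquad (M : 'M['F_d]_n) (x : 'cV['F_d]_n) : R[i] :=
  wexp (bform (upper_mx M) x x) * \prod_i wquad1 (M i i) (x i 0).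

Lemma wquad_neq0 M x : wquad M x != 0.
Proof.
rewrite mulf_neq0 ?wexp_neq0 // prodf_seq_neq0.
by apply/allP=> i _; apply: wquad1_neq0.
Qed.

Lemma wquadD M x y : M^T = M ->
  wquad M (x + y) = wquad M x * wquad M y * wexp (bform M x y).
Proof.
move=> symM; rewrite /wquad -(bform_upper x y symM) bformDl !bformDr.
under eq_bigr => i _ do rewrite mxE wquad1D.
by rewrite !big_split /= -wexp_sum !wexpD; ring.
Qed.

Section CongruenceIso.
Variables (W1 W2 A : 'M['F_d]_n).
Hypotheses (unitA : A \in unitmx) (congrA : A^T *m (W2 - W2^T) *m A = W1 - W1^T).

Let M := A^T *m W2 *m A - W1.

Let symM : M^T = M.
Proof.
have : A^T *m W2^T *m A = A^T *m W2 *m A - (W1 - W1^T).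
  by rewrite -congrA mulmxBr mulmxBl opprB addrC subrK.
rewrite /M => eqT; rewrite [LHS]linearB /= !trmx_mul trmxK mulmxA eqT.
by rewrite opprB addrA addrAC addrK.
Qed.

Let bform_congr x y : bform W2 (A *m x) (A *m y) = bform W1 x y + bform M x y.
Proof. by rewrite /M bformB /bform trmx_mul !mulmxA addrC subrK. Qed.

Definition congr_map (g : G) : G := gelem_of (gcoef g * wquad M g.2) (A *m g.2).

Let gcoef_congr_map g : gcoef (congr_map g) = gcoef g * wquad M g.2.
Proof. by rewrite gcoef_of // mulf_neq0 ?gcoef_neq0 ?wquad_neq0. Qed.

Lemma congr_map_gmul g h : congr_map (gmul W1 g h) = gmul W2 (congr_map g) (congr_map h).
Proof.
apply: gelem_eq; last by rewrite /= gmul_vec mulmxDr.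
rewrite gcoef_congr_map !gcoef_gmul !gcoef_congr_map gmul_vec wquadD //.
by rewrite bform_congr wexpD; ring.
Qed.

Lemma congr_map_iso : group_iso W1 W2 congr_map.
Proof.
split; last exact: congr_map_gmul.
pose inv_coef g := gcoef g / wquad M (invmx A *m g.2).
have inv_coef_neq0 g : inv_coef g != 0.
  by rewrite mulf_neq0 ?gcoef_neq0 ?invr_eq0 ?wquad_neq0.
exists (fun g => gelem_of (inv_coef g) (invmx A *m g.2)) => g.
  apply: gelem_eq; last by rewrite /= mulKmx.
  by rewrite gcoef_of // /inv_coef gcoef_congr_map /= mulKmx // mulfK ?wquad_neq0.
apply: gelem_eq; last by rewrite /= mulKVmx.
by rewrite gcoef_congr_map gcoef_of // divfK ?wquad_neq0.
Qed.

End CongruenceIso.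

Lemma group_iso_exists (W1 W2 : 'M['F_d]_n) :
  \rank (W1 - W1^T) = n -> \rank (W2 - W2^T) = n ->
  exists phi : G -> G, group_iso W1 W2 phi.
Proof.
move=> rank1 rank2.
have unit1 : W1 - W1^T \in unitmx by rewrite -row_free_unit /row_free rank1.
have unit2 : W2 - W2^T \in unitmx by rewrite -row_free_unit /row_free rank2.
have [A unitA congrA] :=
  alternating_mx_congruent (ex_intro _ W1 erefl) unit1 (ex_intro _ W2 erefl) unit2.
by exists (congr_map W1 W2 A); apply: congr_map_iso.
Qed.

End PolarGroup.

Section MatrixUnits.
Variables (F : fieldType) (n : nat).

Lemma mulmx_deltaE (A : 'M[F]_n) (i j a b : 'I_n) :
  (A *m delta_mx i j) a b = A a i * (j == b)%:R.
Proof.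
rewrite mxE (bigD1 i) //= big1 ?addr0 => [|k /negbTE neq_ki]; first by rewrite mxE eqxx eq_sym.
by rewrite mxE neq_ki mulr0.
Qed.

Lemma delta_mulmxE (A : 'M[F]_n) (i j a b : 'I_n) :
  (delta_mx i j *m A) a b = (a == i)%:R * A j b.
Proof.
rewrite mxE (bigD1 j) //= big1 ?addr0 => [|k /negbTE neq_kj]; first by rewrite mxE eqxx andbT.
by rewrite mxE neq_kj andbF mul0r.
Qed.

Lemma delta_mulmx_delta (A : 'M[F]_n) (i j k l : 'I_n) :
  delta_mx i j *m A *m delta_mx k l = A j k *: delta_mx i l.
Proof.
apply/matrixP=> a b; rewrite mulmx_deltaE delta_mulmxE !mxE.
by rewrite (eq_sym b); case: (a == i); case: (l == b); rewrite /= ?mulr1 ?mulr0 ?mul0r ?mul1r.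
Qed.

Lemma delta_comm_scalar (A : 'M[F]_n) :
  (forall i j, A *m delta_mx i j = delta_mx i j *m A) -> exists c, A = c%:M.
Proof.
move=> commA; have [a _ | no_index] := pickP (@predT 'I_n); last first.
  by exists 0; apply/matrixP=> i; have := no_index i.
have diagA i : A i i = A a a.
  by have /matrixP/(_ a i) := commA a i; rewrite mulmx_deltaE delta_mulmxE !eqxx mulr1 mul1r.
have offdiagA i j : i != j -> A i j = 0.
  move=> /negbTE neq_ij; have /matrixP/(_ j j) := commA j i.
  by rewrite mulmx_deltaE delta_mulmxE eqxx mul1r neq_ij mulr0.
exists (A a a); apply/matrixP=> i j; rewrite mxE.
by case: eqVneq => [<-|/offdiagA->]; rewrite ?diagA ?mulr1n ?mulr0n.
Qed.

Lemma invmx_right (A B : 'M[F]_n) : A *m B = 1%:M -> invmx A = B.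
Proof.
move=> AB1; have [unitA _] := mulmx1_unit AB1.
by rewrite -[LHS]mulmx1 -AB1 mulmxA mulVmx ?mul1mx.
Qed.

Variable U : 'I_n -> 'I_n -> 'M[F]_n.
Hypothesis UM : forall i j k l, U i j *m U k l = (j == k)%:R *: U i l.

Definition mxunits_map (X : 'M[F]_n) := \sum_i \sum_j X i j *: U i j.

Definition mxunits_intertwiner (a b : 'I_n) := \sum_j U j a *m delta_mx b j.

Lemma mxunits_intertwinerE a b i l :
  mxunits_intertwiner a b *m delta_mx i l = U i l *m mxunits_intertwiner a b.
Proof.
rewrite mulmx_suml mulmx_sumr (bigD1 i) // [RHS](bigD1 l) //= !big1 ?addr0.
- by rewrite -mulmxA mul_delta_mx mulmxA UM eqxx scale1r.
- by move=> j /negbTE neq_jl; rewrite mulmxA UM eq_sym neq_jl scale0r mul0mx.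
- by move=> j /negbTE neq_ji; rewrite -mulmxA mul_delta_mx_cond neq_ji mulr0n mulmx0.
Qed.

Lemma mxunits_intertwiner_unit a b c :
  U a a c b != 0 -> mxunits_intertwiner a b \in unitmx.
Proof.
move=> Uacb_neq0; pose T := \sum_j delta_mx j c *m U a j.
suff TS : T *m mxunits_intertwiner a b = U a a c b *: 1%:M.
  have : ((U a a c b)^-1 *: T) *m mxunits_intertwiner a b = 1%:M.
    by rewrite -scalemxAl TS scalerA mulVf // scale1r.
  by case/mulmx1_unit.
rewrite mx1_sum_delta scaler_sumr mulmx_suml; apply: eq_bigr => j _.
rewrite mulmx_sumr (bigD1 j) //= big1 ?addr0.
  by rewrite mulmxA -(mulmxA _ (U a j)) UM eqxx scale1r delta_mulmx_delta.
move=> k /negbTE neq_kj.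
by rewrite mulmxA -(mulmxA _ (U a j)) UM eq_sym neq_kj scale0r mulmx0 mul0mx.
Qed.

Lemma mxunits_intertwiner_map a b X :
  mxunits_intertwiner a b *m X = mxunits_map X *m mxunits_intertwiner a b.
Proof.
rewrite {1}(matrix_sum_delta X) mulmx_sumr mulmx_suml; apply: eq_bigr => i _.
rewrite mulmx_sumr mulmx_suml; apply: eq_bigr => j _.
by rewrite -scalemxAr mxunits_intertwinerE scalemxAl.
Qed.

Lemma mxunits_diag_neq0 a : \sum_i U i i = 1%:M -> U a a != 0.
Proof.
move=> U1; apply/eqP=> Uaa0.
have Uii0 i : U i i = 0.
  have /esym := UM i a a i; rewrite eqxx scale1r => ->.
  by have /esym := UM a a a i; rewrite eqxx scale1r Uaa0 mul0mx => ->; rewrite mulmx0.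
have /matrixP/(_ a a) := U1; rewrite big1 // !mxE eqxx => /eqP.
by rewrite eq_sym oner_eq0.
Qed.

(* Skolem-Noether for matrix units. *)
Lemma mxunits_conj : \sum_i U i i = 1%:M ->
  exists2 S, S \in unitmx & forall X, S *m X = mxunits_map X *m S.
Proof.
move=> U1; have [a _ | no_index] := pickP (@predT 'I_n); last first.
  by exists 1%:M => [|X]; [apply: unitmx1 | apply/matrixP=> i; have := no_index i].
have [[c b] /= Uacb | Uaa0] := pickP (fun cb : 'I_n * 'I_n => U a a cb.1 cb.2 != 0).
  exists (mxunits_intertwiner a b); first exact: (mxunits_intertwiner_unit Uacb).
  exact: mxunits_intertwiner_map.
case/eqP: (mxunits_diag_neq0 a U1); apply/matrixP=> c b.
by have /negbFE/eqP := Uaa0 (c, b); rewrite mxE.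
Qed.

End MatrixUnits.

Section Adjoint.
Variable R : realType.
Local Notation C := R[i].

Lemma adjmxE m k (A : 'M[C]_(m, k)) i j : adjmx A i j = (A j i)^*.
Proof. by rewrite !mxE. Qed.

Lemma adjmxB m k (A B : 'M[C]_(m, k)) : adjmx (A - B) = adjmx A - adjmx B.
Proof. by rewrite /adjmx map_mxB linearB. Qed.

Lemma adjmxZ m k a (A : 'M[C]_(m, k)) : adjmx (a *: A) = a^* *: adjmx A.
Proof. by rewrite /adjmx map_mxZ linearZ. Qed.

Lemma adjmx_sum m k I (r : seq I) (P : pred I) (F : I -> 'M[C]_(m, k)) :
  adjmx (\sum_(i <- r | P i) F i) = \sum_(i <- r | P i) adjmx (F i).
Proof. by rewrite /adjmx map_mx_sum linear_sum. Qed.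

Lemma adjmx_mul m k l (A : 'M[C]_(m, k)) (B : 'M[C]_(k, l)) :
  adjmx (A *m B) = adjmx B *m adjmx A.
Proof. by rewrite /adjmx map_mxM trmx_mul. Qed.

Lemma adjmx1 m : adjmx (1%:M : 'M[C]_m) = 1%:M.
Proof. by rewrite /adjmx map_mx1 trmx1. Qed.

Lemma adjmx_inv m (S : 'M[C]_m) : adjmx (invmx S) = invmx (adjmx S).
Proof. by rewrite /adjmx map_invmx trmx_inv. Qed.

Lemma unitmx_adj m (S : 'M[C]_m) : (adjmx S \in unitmx) = (S \in unitmx).
Proof. by rewrite /adjmx unitmx_tr map_unitmx. Qed.

Lemma mxtrace_adj_mul m (X : 'M[C]_m) :
  \tr (adjmx X *m X) = \sum_i \sum_k `|X k i| ^+ 2.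
Proof.
apply: eq_bigr => i _; rewrite mxE; apply: eq_bigr => k _.
by rewrite adjmxE normCK mulrC.
Qed.

Lemma mxtrace_adj_mul_eq0 m (X : 'M[C]_m) : \tr (adjmx X *m X) = 0 -> X = 0.
Proof.
rewrite mxtrace_adj_mul => sum0; apply/matrixP=> k i; rewrite mxE.
have ge0 j l : 0 <= `|X l j| ^+ 2 :> C by apply: exprn_ge0.
have col0 : \sum_l `|X l i| ^+ 2 = 0.
  by apply: (psumr_eq0P _ sum0) => // j _; apply: sumr_ge0.
have /eqP := @psumr_eq0P _ _ _ _ (fun l _ => ge0 i l) col0 k isT.
by rewrite expf_eq0 normr_eq0 => /eqP.
Qed.

End Adjoint.

Section Unitarize.
Variable R : realType.
Local Notation C := R[i].

Lemma spans_comm_scalar (T : Type) (B : T -> Prop) n (r : T -> 'M[C]_n) (A : 'M[C]_n) :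
  spans_mx B r -> (forall b, B b -> A *m r b = r b *m A) -> exists c, A = c%:M.
Proof.
move=> spanB commA; apply: delta_comm_scalar => i j.
have [k [g [c [Bg ->]]]] := spanB (delta_mx i j).
rewrite mulmx_sumr mulmx_suml; apply: eq_bigr => l _.
by rewrite -scalemxAr -scalemxAl commA.
Qed.

Lemma adj_mul_scalar_gt0 n (S : 'M[C]_n.+1) c :
  S \in unitmx -> adjmx S *m S = c%:M -> 0 < c.
Proof.
move=> unitS eqc; rewrite lt_def; apply/andP; split.
  apply: contraTneq unitS => c0.
  have -> : S = 0 by apply: mxtrace_adj_mul_eq0; rewrite eqc c0 mxtrace_scalar mul0rn.
  by rewrite unitmxE det0 unitr0.
have /matrixP/(_ 0 0) := eqc; rewrite [RHS]mxE mulr1n => <-; rewrite mxE.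
by apply: sumr_ge0 => k _; rewrite adjmxE mulrC -normCK exprn_ge0.
Qed.

Lemma unitarize n (S : 'M[C]_n) c : S \in unitmx -> adjmx S *m S = c%:M ->
  exists2 S', unitary_mx S' & forall X, S' *m X *m invmx S' = S *m X *m invmx S.
Proof.
case: n S => [|n] S unitS eqc.
  by exists 1%:M => [|X]; [split; apply/matrixP=> -[] | apply/matrixP=> -[]].
have c_gt0 := adj_mul_scalar_gt0 unitS eqc.
pose a := (sqrtC c)^-1; have a_gt0 : 0 < a by rewrite invr_gt0 sqrtC_gt0.
have unitaryS : adjmx (a *: S) *m (a *: S) = 1%:M.
  rewrite adjmxZ (geC0_conj (ltW a_gt0)) -scalemxAl -scalemxAr scalerA eqc.
  by rewrite scale_scalar_mx -expr2 exprVn sqrtCK mulVf ?gt_eqF.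
exists (a *: S) => [|X]; first by split => //; apply: mulmx1C.
have unit_aS : a *: S \in unitmx by case/mulmx1_unit: unitaryS.
rewrite invmxZ // -scalemxAl -scalemxAl -scalemxAr scalerA.
by rewrite mulfV ?gt_eqF // scale1r.
Qed.

Lemma hermitian_conj_comm n (S X : 'M[C]_n) : S \in unitmx ->
  hermitian_mx X -> hermitian_mx (S *m X *m invmx S) ->
  adjmx S *m S *m X = X *m (adjmx S *m S).
Proof.
move=> unitS hermX; rewrite /hermitian_mx !adjmx_mul hermX adjmx_inv => eqX.
have unitSa : adjmx S \in unitmx by rewrite unitmx_adj.
have := congr1 (fun Y => adjmx S *m Y *m S) eqX.
by rewrite !mulmxA mulmxV // mul1mx -!mulmxA mulVmx // mulmx1 => ->.
Qed.

Lemma unitary_conj_comm n (S X : 'M[C]_n) : S \in unitmx ->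
  unitary_mx X -> unitary_mx (S *m X *m invmx S) ->
  adjmx S *m S *m X = X *m (adjmx S *m S).
Proof.
move=> unitS [unitX _] [_]; rewrite !adjmx_mul adjmx_inv => eqX.
have unitSa : adjmx S \in unitmx by rewrite unitmx_adj.
have : adjmx X *m (adjmx S *m S) *m X = adjmx S *m S.
  have := congr1 (fun Y => adjmx S *m Y *m S) eqX.
  by rewrite mulmx1 !mulmxA mulmxV // mul1mx -!mulmxA mulVmx // mulmx1 !mulmxA.
by move=> {2}<-; rewrite !mulmxA unitX mul1mx.
Qed.

End Unitarize.

Section JointSpan.
Variables (R : realType) (G : Type) (N : nat) (r1 r2 : G -> 'M[R[i]]_N).

Definition joint_span (X Y : 'M[R[i]]_N) :=
  exists (I : finType) (g : I -> G) (c : I -> R[i]),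
    X = \sum_k c k *: r1 (g k) /\ Y = \sum_k c k *: r2 (g k).

Definition rspan (Y : 'M[R[i]]_N) := exists X, joint_span X Y.

Lemma joint_span_rep g : joint_span (r1 g) (r2 g).
Proof. by exists 'I_1, (fun=> g), (fun=> 1); rewrite !big_ord1 !scale1r. Qed.

Lemma joint_span0 : joint_span 0 0.
Proof.
by exists void, (fun v : void => match v with end), (fun=> 0); rewrite !big1 // => -[].
Qed.

Lemma joint_spanD X1 Y1 X2 Y2 :
  joint_span X1 Y1 -> joint_span X2 Y2 -> joint_span (X1 + X2) (Y1 + Y2).
Proof.
move=> [I1 [g1 [c1 [-> ->]]]] [I2 [g2 [c2 [-> ->]]]].
exists (I1 + I2)%type, (fun k => match k with inl k => g1 k | inr k => g2 k end).
by exists (fun k => match k with inl k => c1 k | inr k => c2 k end); rewrite !big_sumType.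
Qed.

Lemma joint_spanZ a X Y : joint_span X Y -> joint_span (a *: X) (a *: Y).
Proof.
move=> [I [g [c [-> ->]]]]; exists I, g, (fun k => a * c k).
by rewrite !scaler_sumr; split; apply: eq_bigr => k _; rewrite scalerA.
Qed.

Lemma joint_spanB X1 Y1 X2 Y2 :
  joint_span X1 Y1 -> joint_span X2 Y2 -> joint_span (X1 - X2) (Y1 - Y2).
Proof.
by move=> js1 js2; rewrite -(scaleN1r X2) -(scaleN1r Y2); apply/joint_spanD/joint_spanZ.
Qed.

Lemma joint_span_sum (I : finType) (X Y : I -> 'M[R[i]]_N) :
  (forall k, joint_span (X k) (Y k)) -> joint_span (\sum_k X k) (\sum_k Y k).
Proof. by move=> jsXY; apply: big_ind2 => //; [apply: joint_span0 | apply: joint_spanD]. Qed.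

Variable mulG : G -> G -> G.
Hypotheses (r1M : forall g h, r1 (mulG g h) = r1 g *m r1 h)
           (r2M : forall g h, r2 (mulG g h) = r2 g *m r2 h).

Lemma joint_spanM X1 Y1 X2 Y2 :
  joint_span X1 Y1 -> joint_span X2 Y2 -> joint_span (X1 *m X2) (Y1 *m Y2).
Proof.
move=> [I1 [g1 [c1 [-> ->]]]] [I2 [g2 [c2 [-> ->]]]].
exists (I1 * I2)%type, (fun k => mulG (g1 k.1) (g2 k.2)), (fun k => c1 k.1 * c2 k.2).
split; rewrite mulmx_suml; under eq_bigr do rewrite mulmx_sumr;
by rewrite pair_bigA; under eq_bigr do rewrite -scalemxAl -scalemxAr scalerA -?r1M -?r2M.
Qed.

Lemma rspanZ a Y : rspan Y -> rspan (a *: Y).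
Proof. by move=> [X js]; exists (a *: X); apply: joint_spanZ. Qed.

Lemma rspanB Y1 Y2 : rspan Y1 -> rspan Y2 -> rspan (Y1 - Y2).
Proof. by move=> [X1 js1] [X2 js2]; exists (X1 - X2); apply: joint_spanB. Qed.

Lemma rspanM Y1 Y2 : rspan Y1 -> rspan Y2 -> rspan (Y1 *m Y2).
Proof. by move=> [X1 js1] [X2 js2]; exists (X1 *m X2); apply: joint_spanM. Qed.

Lemma rspan_sum (I : finType) (Y : I -> 'M[R[i]]_N) :
  (forall k, rspan (Y k)) -> rspan (\sum_k Y k).
Proof.
move=> spanY; apply: (big_ind rspan) => //; first by exists 0; apply: joint_span0.
by move=> Y1 Y2 [X1 js1] [X2 js2]; exists (X1 + X2); apply: joint_spanD.
Qed.

Hypothesis tr_r12 : forall g, \tr (r1 g) = \tr (r2 g).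

Lemma joint_span_trace X Y : joint_span X Y -> \tr X = \tr Y.
Proof.
move=> [I [g [c [-> ->]]]]; rewrite !raddf_sum /=.
by apply: eq_bigr => k _; rewrite !mxtraceZ tr_r12.
Qed.

Lemma joint_span0_eq0 Y : joint_span 0 Y -> rspan (adjmx Y) -> Y = 0.
Proof.
(* (X *m 0, Y^* *m Y) is jointly spanned, so tr (Y^* *m Y) = tr 0. *)
move=> js0Y [X jsXY]; apply: mxtrace_adj_mul_eq0.
by rewrite -(joint_span_trace (joint_spanM jsXY js0Y)) mulmx0 mxtrace0.
Qed.

End JointSpan.

Section TraceConjugacy.
Variables (R : realType) (G : Type) (mulG : G -> G -> G) (one : G) (N : nat).
Variables (r1 r2 : G -> 'M[R[i]]_N) (B : G -> Prop).
Hypotheses (r1M : forall g h, r1 (mulG g h) = r1 g *m r1 h)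
           (r2M : forall g h, r2 (mulG g h) = r2 g *m r2 h)
           (r1_one : r1 one = 1%:M) (r2_one : r2 one = 1%:M)
           (tr_r12 : forall g, \tr (r1 g) = \tr (r2 g)).
Hypotheses (spanB : spans_mx B r1) (adjB : forall b, B b -> exists b', adjmx (r2 b) = r2 b').

Local Notation joint_span := (joint_span r1 r2).
Local Notation rspan := (rspan r1 r2).

Lemma joint_span_lift X : exists2 Y, joint_span X Y & rspan (adjmx Y).
Proof.
have [k [g [c [Bg ->]]]] := spanB X.
exists (\sum_l c l *: r2 (g l)); first by exists 'I_k, g, c.
rewrite adjmx_sum; apply: rspan_sum => l; rewrite adjmxZ; apply: rspanZ.
by have [b' ->] := adjB (Bg l); exists (r1 b'); apply: joint_span_rep.
Qed.

Section LiftedUnits.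
Variable U : 'I_N -> 'I_N -> 'M[R[i]]_N.
Hypotheses (liftU : forall i j, joint_span (delta_mx i j) (U i j))
           (adjU : forall i j, rspan (adjmx (U i j))).

Lemma lifted_unitsM i j k l : U i j *m U k l = (j == k)%:R *: U i l.
Proof.
apply/eqP; rewrite -subr_eq0; apply/eqP; apply: (joint_span0_eq0 r1M r2M tr_r12).
  rewrite -(subrr (delta_mx i j *m delta_mx k l)) {2}mul_delta_mx_cond -scaler_nat.
  by apply: joint_spanB; [apply: joint_spanM | apply: joint_spanZ].
rewrite adjmxB adjmx_mul adjmxZ.
by apply: rspanB; [apply: rspanM | apply: rspanZ].
Qed.

Lemma lifted_units1 : \sum_i U i i = 1%:M.
Proof.
apply/eqP; rewrite -subr_eq0; apply/eqP; apply: (joint_span0_eq0 r1M r2M tr_r12).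
  have sum_delta : 1%:M = \sum_i delta_mx i i :> 'M[R[i]]_N by apply: mx1_sum_delta.
  have := joint_spanB (joint_span_sum (fun i => liftU i i)) (joint_span_rep r1 r2 one).
  by rewrite -sum_delta r1_one r2_one subrr.
rewrite adjmxB adjmx_sum adjmx1 -r2_one; apply: rspanB; first exact: rspan_sum.
by exists (r1 one); apply: joint_span_rep.
Qed.

Lemma joint_span_mxunits_map X : joint_span X (mxunits_map U X).
Proof.
rewrite {1}(matrix_sum_delta X); apply: joint_span_sum => i.
by apply: joint_span_sum => j; apply/joint_spanZ/liftU.
Qed.

Lemma lifted_units_conj : exists2 S, S \in unitmx & forall g, r2 g = S *m r1 g *m invmx S.
Proof.
have [S unitS SU] := mxunits_conj lifted_unitsM lifted_units1.
have rspan_all Y : rspan Y.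
  exists (invmx S *m Y *m S).
  suff {2}-> : Y = mxunits_map U (invmx S *m Y *m S) by apply: joint_span_mxunits_map.
  by apply: (can_inj (mulmxK unitS)); rewrite /= -SU !mulmxA mulmxV // mul1mx.
exists S => // g; rewrite SU mulmxK //.
apply/eqP; rewrite -subr_eq0; apply/eqP; apply: (joint_span0_eq0 r1M r2M tr_r12).
  by rewrite -(subrr (r1 g)); apply/joint_spanB/joint_span_mxunits_map/joint_span_rep.
exact: rspan_all.
Qed.

End LiftedUnits.

Theorem conj_of_trace : exists2 S, S \in unitmx & forall g, r2 g = S *m r1 g *m invmx S.
Proof.
have [U liftU adjU] :=
  fin_all_exists2 (fun ij : 'I_N * 'I_N => joint_span_lift (delta_mx ij.1 ij.2)).
exact: (@lifted_units_conj (fun i j => U (i, j)) (fun i j => liftU (i, j))).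
Qed.

Theorem unitary_conj_of_trace (Q : 'M[R[i]]_N -> Prop) :
  (forall S X, S \in unitmx -> Q X -> Q (S *m X *m invmx S) ->
     adjmx S *m S *m X = X *m (adjmx S *m S)) ->
  (forall b, B b -> Q (r1 b) /\ Q (r2 b)) ->
  exists2 S, unitary_mx S & forall g, r2 g = S *m r1 g *m invmx S.
Proof.
move=> Q_comm QB; have [S unitS conjS] := conj_of_trace.
have [c eqc] : exists c, adjmx S *m S = c%:M.
  apply: (spans_comm_scalar spanB) => b Bb; have [Q1 Q2] := QB b Bb.
  by apply: Q_comm => //; rewrite -conjS.
have [S' unitaryS' conjS'] := unitarize unitS eqc.
by exists S' => // g; rewrite conjS'.
Qed.

End TraceConjugacy.

Section Representations.
Variables (F : fieldType) (G : Type) (mulG : G -> G -> G) (one : G) (n : nat).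
Variables (r : G -> 'M[F]_n).
Hypothesis rM : forall g h, r (mulG g h) = r g *m r h.

Lemma rep_one : mulG one one = one -> r one \in unitmx -> r one = 1%:M.
Proof.
move=> one_one unit_one.
by rewrite -[LHS]mul1mx -(mulVmx unit_one) -mulmxA -rM one_one.
Qed.

Lemma rep_invmx g g' : r one = 1%:M -> mulG g g' = one -> invmx (r g) = r g'.
Proof. by move=> r_one gg'; apply: invmx_right; rewrite -rM gg'. Qed.

End Representations.

Section PolarRepresentations.
Variables (R : realType) (d : nat) (w : R[i]) (P : polar_data d w).
Hypotheses (d_prime : prime d) (w_prim : d.-primitive_root w).
Variables (n : nat) (W : 'M['F_d]_n) (N : nat) (tau : 'cV['F_d]_n -> 'M[R[i]]_N).
Hypothesis repW : polar_rep P W tau.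

Lemma polar_muE (g : gelem P n) : polar_mu tau g = gcoef g *: tau g.2.
Proof. by case: g => [[a p] x]. Qed.

Lemma polar_rep_unit (g : gelem P n) : polar_mu tau g \in unitmx.
Proof. by case: repW => tau_unit _ _; rewrite polar_muE unitmxZ ?unitfE ?gcoef_neq0. Qed.

Lemma polar_repM (g h : gelem P n) :
  polar_mu tau (gmul W g h) = polar_mu tau g *m polar_mu tau h.
Proof. by case: repW. Qed.

Lemma polar_rep_one : polar_mu tau (gid P n) = 1%:M.
Proof.
apply: (rep_one (r := polar_mu tau) polar_repM); first exact: gmul_gid.
exact: polar_rep_unit.
Qed.

End PolarRepresentations.

Section PolarEquivalence.
Variables (R : realType) (d : nat) (w : R[i]) (P : polar_data d w).
Hypotheses (d_prime : prime d) (w_prim : d.-primitive_root w).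
Variables (n : nat) (W1 W2 : 'M['F_d]_n) (N : nat) (tau1 tau2 : 'cV['F_d]_n -> 'M[R[i]]_N).
Variable phi : gelem P n -> gelem P n.
Hypotheses (rep1 : polar_rep P W1 tau1) (rep2 : polar_rep P W2 tau2)
           (iso_phi : group_iso W1 W2 phi)
           (tr_phi : forall g, \tr (polar_mu tau1 g) = \tr (polar_mu tau2 (phi g))).

Lemma polar_pullbackM g h :
  polar_mu tau2 (phi (gmul W1 g h)) = polar_mu tau2 (phi g) *m polar_mu tau2 (phi h).
Proof. by case: iso_phi => _ phiM; rewrite /= phiM (polar_repM rep2). Qed.

Lemma polar_pullback_one : polar_mu tau2 (phi (gid P n)) = 1%:M.
Proof.
apply: (rep_one (r := polar_mu tau2 \o phi) polar_pullbackM); first exact: gmul_gid.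
exact: (polar_rep_unit d_prime w_prim rep2).
Qed.

Lemma polar_pullback_invmx g :
  exists g', invmx (polar_mu tau2 (phi g)) = polar_mu tau2 (phi g').
Proof.
have [g' gg'] := gmul_right_inverse d_prime w_prim W1 g.
exists g'.
exact: (rep_invmx (r := polar_mu tau2 \o phi) polar_pullbackM polar_pullback_one gg').
Qed.

Theorem polar_unitary_equiv (B : gelem P n -> Prop) (Q : 'M[R[i]]_N -> Prop) :
  spans_mx B (polar_mu tau1) ->
  (forall S X, S \in unitmx -> Q X -> Q (S *m X *m invmx S) ->
     adjmx S *m S *m X = X *m (adjmx S *m S)) ->
  (forall b, B b -> Q (polar_mu tau1 b) /\ Q (polar_mu tau2 (phi b))) ->
  (forall b, B b -> exists b', adjmx (polar_mu tau2 (phi b)) = polar_mu tau2 (phi b')) ->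
  exists2 S, unitary_mx S &
    forall g, polar_mu tau2 (phi g) = S *m polar_mu tau1 g *m invmx S.
Proof.
move=> spanB Q_comm QB adjB.
exact: (unitary_conj_of_trace (r2 := polar_mu tau2 \o phi) (polar_repM rep1) polar_pullbackM
  (polar_rep_one d_prime w_prim rep1) polar_pullback_one tr_phi spanB adjB Q_comm QB).
Qed.

End PolarEquivalence.

Theorem theorem2 (R : realType) (d n N1 N2 : nat) (w : R[i])
    (P : polar_data d w) (W1 W2 : 'M['F_d]_n)
    (tau1 : 'cV['F_d]_n -> 'M[R[i]]_N1) (tau2 : 'cV['F_d]_n -> 'M[R[i]]_N2) :
  prime d -> d.-primitive_root w ->
  polar_rep P W1 tau1 -> polar_rep P W2 tau2 ->
  \rank (W1 - W1^T) = n -> \rank (W2 - W2^T) = n ->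
  (exists phi : gelem P n -> gelem P n, group_iso W1 W2 phi) /\
  (forall phi : gelem P n -> gelem P n, group_iso W1 W2 phi ->
     (forall g, \tr (polar_mu tau1 g) = \tr (polar_mu tau2 (phi g))) ->
     (forall B : gelem P n -> Prop,
        spans_mx B (polar_mu tau1) ->
        (forall g, B g -> hermitian_mx (polar_mu tau1 g)) ->
        (forall g, B g -> hermitian_mx (polar_mu tau2 (phi g))) ->
        exists e : N1 = N2, exists S : 'M[R[i]]_N2,
          unitary_mx S /\
          forall g, polar_mu tau2 (phi g) =
                    S *m castmx (e, e) (polar_mu tau1 g) *m invmx S) /\
     (forall B : gelem P n -> Prop,
        spans_mx B (polar_mu tau1) ->
        (forall g, B g -> unitary_mx (polar_mu tau1 g)) ->
        (forall g, B g -> unitary_mx (polar_mu tau2 (phi g))) ->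
        exists e : N1 = N2, exists S : 'M[R[i]]_N2,
          unitary_mx S /\
          forall g, polar_mu tau2 (phi g) =
                    S *m castmx (e, e) (polar_mu tau1 g) *m invmx S)).
Proof.
move=> d_prime w_prim rep1 rep2 rank1 rank2; split; first exact: group_iso_exists.
move=> phi iso_phi tr_phi; have eN : N1 = N2.
  have /eqP := tr_phi (gid P n).
  rewrite (polar_rep_one d_prime w_prim rep1) (polar_pullback_one d_prime w_prim rep2 iso_phi).
  by rewrite !mxtrace1 eqr_nat => /eqP.
subst N2; have equiv := polar_unitary_equiv d_prime w_prim rep1 rep2 iso_phi tr_phi.
split=> B spanB Q1 Q2; exists erefl.
- have [S unitaryS conjS] := equiv B _ spanB (@hermitian_conj_comm _ _)
    (fun b Bb => conj (Q1 b Bb) (Q2 b Bb)) (fun b Bb => ex_intro _ b (Q2 b Bb)).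
  by exists S; split => // g; rewrite castmx_id conjS.
- have adjB b : B b -> exists b', adjmx (polar_mu tau2 (phi b)) = polar_mu tau2 (phi b').
    move=> Bb; rewrite -(invmx_right (Q2 b Bb).1).
    exact: (polar_pullback_invmx d_prime w_prim rep2 iso_phi).
  have [S unitaryS conjS] := equiv B _ spanB (@unitary_conj_comm _ _)
    (fun b Bb => conj (Q1 b Bb) (Q2 b Bb)) adjB.
  by exists S; split => // g; rewrite castmx_id conjS.
Qed.
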